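(* Let $R$ be a commutative ring with ${\rm char}(R)=3$, $G$ a group with involution $\varphi$, and assume $(RG)^-_\varphi$ is commutative. Let $g,h\in G\setminus G_\varphi$ be non-commuting elements satisfying one of the following conditions: (C3) $gh\in G_\varphi$, $hg=\varphi(g)h=g\varphi(h)$; (C4) $gh=h\varphi(g)=\varphi(g)\varphi(h)$ and $\varphi(h)g=\varphi(g)h$; (C5) $gh=\varphi(h)g=\varphi(g)\varphi(h)$ and $h\varphi(g)=g\varphi(h)$; (C6) $hg\in G_\varphi$, $gh=\varphi(h)g=h\varphi(g)$. Then $\langle g^{-1}\varphi(g)\rangle=\langle h^{-1}\varphi(h)\rangle=\langle (g,h)\rangle$ and $(g,h)^3=1$.
   Context: An involution on a group $G$ is a map $\varphi:G\to G$ with $\varphi(gh)=\varphi(h)\varphi(g)$ and $\varphi^2=\mathrm{id}$, extended $R$-linearly to $RG$. $G_\varphi=\{g\in G\mid\varphi(g)=g\}$; $(RG)^-_\varphi=\{\alpha\in RG\mid\varphi(\alpha)=-\alpha\}$. The group commutator is $(g,h)=ghg^{-1}h^{-1}$. *)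

From HB Require Import structures.
From mathcomp Require Import all_boot all_order all_algebra.
Set Implicit Arguments. Unset Strict Implicit. Unset Printing Implicit Defensive.
Import Order.TTheory GRing.Theory Num.Theory.
Local Open Scope ring_scope.

(* An arbitrary (possibly infinite) group, given by its carrier (an eqType,
   needed to compute coefficients of group-ring elements) and operations. *)
Definition group_axioms (G : eqType) (mul : G -> G -> G) (one : G) (inv : G -> G) : Prop :=
  [/\ (forall x y z, mul x (mul y z) = mul (mul x y) z),
      (forall x, mul one x = x), (forall x, mul x one = x),
      (forall x, mul (inv x) x = one) & (forall x, mul x (inv x) = one)].

Definition is_involution (G : eqType) (mul : G -> G -> G) (phi : G -> G) : Prop :=
  (forall g h, phi (mul g h) = mul (phi h) (phi g)) /\ (forall g, phi (phi g) = g).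

(* Group ring RG: an element is a finite formal sum, represented by a list of
   (coefficient, group element) pairs; two lists denote the same element of RG
   iff they have the same coefficient function. *)
Definition gr (R : comNzRingType) (G : eqType) := seq (R * G).

Definition gr_coeff (R : comNzRingType) (G : eqType) (a : gr R G) (x : G) : R :=
  \sum_(p <- a | p.2 == x) p.1.

Definition gr_mul (R : comNzRingType) (G : eqType) (mul : G -> G -> G)
  (a b : gr R G) : gr R G :=
  [seq (p.1 * q.1, mul p.2 q.2) | p <- a, q <- b].

Definition gr_inv (R : comNzRingType) (G : eqType) (phi : G -> G) (a : gr R G) : gr R G :=
  [seq (p.1, phi p.2) | p <- a].

Definition gr_skew (R : comNzRingType) (G : eqType) (phi : G -> G) (a : gr R G) : Prop :=
  forall x, gr_coeff (gr_inv phi a) x = - gr_coeff a x.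

Definition skew_commutative (R : comNzRingType) (G : eqType) (mul : G -> G -> G)
  (phi : G -> G) : Prop :=
  forall a b : gr R G, gr_skew phi a -> gr_skew phi b ->
    forall x, gr_coeff (gr_mul mul a b) x = gr_coeff (gr_mul mul b a) x.

Definition gpow (G : eqType) (mul : G -> G -> G) (one : G) (inv : G -> G)
  (x : G) (n : int) : G :=
  match n with
  | Posz k => iter k (mul x) one
  | Negz k => inv (iter k.+1 (mul x) one)
  end.

Definition in_cyc (G : eqType) (mul : G -> G -> G) (one : G) (inv : G -> G)
  (x y : G) : Prop := exists n : int, y = gpow mul one inv x n.

Definition same_cyc (G : eqType) (mul : G -> G -> G) (one : G) (inv : G -> G)
  (x y : G) : Prop := forall z, in_cyc mul one inv x z <-> in_cyc mul one inv y z.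

Definition gcomm (G : eqType) (mul : G -> G -> G) (inv : G -> G) (g h : G) : G :=
  mul g (mul h (mul (inv g) (inv h))).

From HB Require Import structures.
From mathcomp Require Import all_boot all_order all_algebra ring.
Set Implicit Arguments. Unset Strict Implicit. Unset Printing Implicit Defensive.
Import GRing.Theory.
Local Open Scope ring_scope.

(* For x in G, x - phi(x) is phi-skew, so
     (x - phi x)(y - phi y) = (y - phi y)(x - phi x).  Comparing the
     coefficients at z and using -1 = 2 in characteristic 3 gives a congruence
     mod 3 between counts of the products xy, x phi(y), phi(x) y,
     phi(x) phi(y) equal to z and the same counts for yx ([skew_coeff3_sym]).
   - Group theory.  Each of (C3)-(C6), with the two extra equalities that this
     congruence forces for a suitable z ([condition_C3] ... [condition_C6]),
     gives five relations among g, h, phi g, phi h from which c = (g,h)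
     commutes with g and h, c^3 = 1 and g^-1 phi(g), h^-1 phi(h) lie in
     {c, c^-1} ([comm_cube_pm_C3] ... [comm_cube_pm_C6]).  An element of
     order dividing 3 and its inverse generate the same cyclic group
     ([same_cyc_pm]), which concludes. *)

Lemma natr_inj_mod_pchar (R : nzRingType) (p : nat) (charRp : p \in [pchar R])
  (m n : nat) : m%:R = n%:R :> R -> (m = n %[mod p])%N.
Proof.
move=> Emn; apply/eqP.
wlog le_nm : m n Emn / (n <= m)%N => [hyp|].
  by case: (leqP n m) => [|/ltnW] /hyp; rewrite // eq_sym; apply; rewrite Emn.
by rewrite eqn_mod_dvd // (dvdn_pcharf charRp) natrB // Emn subrr.
Qed.

Section SkewCount.
Variables (G : eqType) (mul : G -> G -> G) (phi : G -> G).

(* The coefficient at z of (x - phi x)(y - phi y), read modulo 3 with the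
   weight -1 replaced by 2. *)
Definition skew_coeff3 (x y z : G) : nat :=
  ((mul x y == z) + 2 * (mul x (phi y) == z) + 2 * (mul (phi x) y == z)
   + (mul (phi x) (phi y) == z))%N.

Definition skew_pair (R : comNzRingType) (x : G) : gr R G := [:: (1, x); (-1, phi x)].

Hypothesis phiK : involutive phi.

Lemma skew_pair_skew (R : comNzRingType) (x : G) : gr_skew phi (skew_pair R x).
Proof.
move=> z; rewrite /gr_coeff /gr_inv /= !big_cons big_nil /= phiK.
by case: (phi x == z); case: (x == z); rewrite ?addr0 ?oppr0 ?opprK ?opprD ?subrr.
Qed.

Lemma coeff_skew_pair_mul (R : comNzRingType) (x y z : G) :
  3%N \in [pchar R] ->
  gr_coeff (gr_mul mul (skew_pair R x) (skew_pair R y)) z = (skew_coeff3 x y z)%:R.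
Proof.
move=> charR3.
have oppr1E : -1 = 2%:R :> R.
  by apply/eqP; rewrite eq_sym -subr_eq0 opprK natr1 -(dvdn_pcharf charR3).
rewrite /gr_coeff /gr_mul /skew_coeff3 /= !big_cons big_nil /= !natrD !mulrNN oppr1E.
by do 4!case: (_ == z) => /=; ring.
Qed.

Lemma skew_coeff3_sym (R : comNzRingType) :
  3%N \in [pchar R] -> skew_commutative R mul phi ->
  forall x y z, (skew_coeff3 x y z = skew_coeff3 y x z %[mod 3])%N.
Proof.
move=> charR3 skewC x y z; apply: (natr_inj_mod_pchar charR3).
rewrite -!coeff_skew_pair_mul //.
exact: skewC (skew_pair_skew R x) (skew_pair_skew R y) z.
Qed.
End SkewCount.

Section GroupCalculus.
Variables (G : eqType) (mul : G -> G -> G) (one : G) (inv : G -> G).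
Hypothesis HG : group_axioms mul one inv.

Local Notation "x * y" := (mul x y).
Local Notation "x ^-1" := (inv x).
Local Notation "1" := one.

Lemma mulgA x y z : x * (y * z) = x * y * z. Proof. by case: HG. Qed.
Lemma mul1g x : 1 * x = x. Proof. by case: HG. Qed.
Lemma mulg1 x : x * 1 = x. Proof. by case: HG. Qed.
Lemma mulVg x : x^-1 * x = 1. Proof. by case: HG. Qed.
Lemma mulgV x : x * x^-1 = 1. Proof. by case: HG. Qed.

Lemma mulKg x y : x^-1 * (x * y) = y. Proof. by rewrite mulgA mulVg mul1g. Qed.
Lemma mulKVg x y : x * (x^-1 * y) = y. Proof. by rewrite mulgA mulgV mul1g. Qed.

Lemma mulgI x y z : x * y = x * z -> y = z.
Proof. by move=> E; rewrite -(mulKg x y) E mulKg. Qed.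

Lemma mulIg x y z : y * x = z * x -> y = z.
Proof. by move=> E; rewrite -[y]mulg1 -(mulgV x) mulgA E -mulgA mulgV mulg1. Qed.

Lemma invg_unique x y : x * y = 1 -> y = x^-1.
Proof. by move=> E; rewrite -(mulKg x y) E mulg1. Qed.

Lemma mulg_rassoc x y w r : x * y = w -> x * (y * r) = w * r.
Proof. by move=> E; rewrite mulgA E. Qed.

Lemma mulg_rassoc2 x y u v r : x * y = u * v -> x * (y * r) = u * (v * r).
Proof. by move=> E; rewrite !mulgA E. Qed.

Lemma mulg_rassoc3 x y z u v r : x * (y * z) = u * v -> x * (y * (z * r)) = u * (v * r).
Proof. by move=> E; rewrite !mulgA -(mulgA x) E. Qed.

Lemma gcommE g h : gcomm mul inv g h * (h * g) = g * h.
Proof. by rewrite /gcomm -!mulgA mulKg mulVg mulg1. Qed.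

Lemma lquot_eq c g a : a = g * c -> g^-1 * a = c.
Proof. by move->; rewrite mulKg. Qed.

Lemma lquot_eqV c g a : c * a = g -> c * g = g * c -> g^-1 * a = c^-1.
Proof.
move=> caE cgC; apply: invg_unique.
have cVgC : c * g^-1 = g^-1 * c.
  by apply: (mulgI (x := g)); rewrite mulKVg mulgA -cgC -mulgA mulgV mulg1.
by rewrite mulgA cVgC -mulgA caE mulVg.
Qed.

Definition pm_of (c x : G) : Prop := x = c \/ x = c^-1.

Lemma in_cyc_cube c z : c * (c * c) = 1 ->
  in_cyc mul one inv c z <-> [\/ z = 1, z = c | z = c * c].
Proof.
move=> c3.
have iterP k : [\/ iter k (mul c) 1 = 1, iter k (mul c) 1 = c
               | iter k (mul c) 1 = c * c].
  elim: k => [|k [] /= ->]; [exact: Or31 | | |].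
  - by apply: Or32; rewrite mulg1.
  - exact: Or33.
  - exact: Or31.
split.
- case=> [[k|k] ->] /=; first exact: iterP.
  case: (iterP k.+1) => /= ->.
  + by apply: Or31; apply/esym/invg_unique; rewrite mul1g.
  + by apply: Or33; apply/esym/invg_unique.
  + by apply: Or32; apply/esym/invg_unique; rewrite -mulgA.
- by case=> ->; [exists 0%Z | exists 1%Z | exists 2%Z]; rewrite /= ?mulg1.
Qed.

Lemma same_cyc_pm c x : c * (c * c) = 1 -> pm_of c x -> same_cyc mul one inv x c.
Proof.
move=> c3 [-> //|->].
have cVE : c^-1 = c * c by apply/esym/invg_unique.
have c3r r : c * (c * (c * r)) = r by rewrite !mulgA -(mulgA c) c3 mul1g.
have c2_3 : c * c * (c * c * (c * c)) = 1 by rewrite -!mulgA c3r.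
have c2_2 : c * c * (c * c) = c by rewrite -!mulgA c3r.
move=> z; rewrite cVE (in_cyc_cube _ c2_3) (in_cyc_cube _ c3) c2_2.
by split; case=> ->; [apply: Or31 | apply: Or33 | apply: Or32
                     | apply: Or31 | apply: Or33 | apply: Or32].
Qed.

(* The conclusion of the theorem for the pair (g, h), with a, b standing for
   phi g, phi h: the commutator c = (g,h) has c^3 = 1 and both g^-1 a and
   h^-1 b lie in {c, c^-1}. *)
Definition comm_cube_pm (g h a b : G) : Prop :=
  let c := gcomm mul inv g h in
  c * (c * c) = 1 /\ pm_of c (g^-1 * a) /\ pm_of c (h^-1 * b).

(* The group-theoretic core of each case: from the relations of (C3)-(C6)
   together with the two relations forced by the skew congruence (a, b stand
   for phi g, phi h), one derives c a = g or g c = a, c h = b or c b = h,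
   that c commutes with g and h, and then c^3 = 1. *)
Lemma comm_cube_pm_C3 g h a b
  (e1 : h * g = a * h) (e2 : h * g = g * b) (e3 : b * a = g * h)
  (e4 : a * b = h * a) (e5 : h * a = b * g) : comm_cube_pm g h a b.
Proof.
rewrite /comm_cube_pm; have e0 := gcommE g h; set c := gcomm _ _ g h in e0 *.
clearbody c.
have caE : c * a = g by apply: (mulIg (x := h)); rewrite -mulgA -e1 e0.
have chC : c * h = h * c.
  by apply: (mulIg (x := a)); rewrite -!mulgA -e4 (mulg_rassoc _ caE) -e2 caE.
have cbE : c * b = h.
  by apply: (mulIg (x := g)); rewrite -mulgA -e5 (mulg_rassoc2 _ chC) caE.
have cgC : c * g = g * c.
  by apply: (mulIg (x := b)); rewrite -!mulgA -e2 e0 cbE.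
split.
  apply: (mulIg (x := g * h)); rewrite mul1g -!mulgA -e3.
  by rewrite (mulg_rassoc _ cbE) (mulg_rassoc2 _ chC) caE e0.
by split; right; apply: lquot_eqV.
Qed.

Lemma comm_cube_pm_C4 g h a b
  (e1 : g * h = h * a) (e2 : h * g = g * b) (e3 : a * b = g * h)
  (e4 : b * a = h * g) (e5 : b * g = a * h) : comm_cube_pm g h a b.
Proof.
rewrite /comm_cube_pm; have e0 := gcommE g h; set c := gcomm _ _ g h in e0 *.
clearbody c.
have chC : c * h = h * c.
  apply: (mulIg (x := h * g)); rewrite -!mulgA e0 e2 (mulg_rassoc3 _ e0).
  by rewrite (mulg_rassoc2 _ e1) e3 e1.
have cgE : c * g = a.
  by apply: (mulgI (x := h)); rewrite -e1 -e0 (mulg_rassoc2 _ chC).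
have bcE : b * c = h by apply: (mulIg (x := g)); rewrite -mulgA cgE e4.
have cbE : c * b = h by apply: (mulIg (x := c)); rewrite -mulgA bcE chC.
have cgC : c * g = g * c.
  by apply: (mulIg (x := b)); rewrite -!mulgA -e2 e0 cbE.
split.
  apply: (mulIg (x := h * g)); rewrite mul1g -!mulgA e0.
  by rewrite (mulg_rassoc _ cgE) -e5 (mulg_rassoc _ cbE).
split; [left | right]; last exact: lquot_eqV.
by apply: lquot_eq; rewrite -cgE cgC.
Qed.

Lemma comm_cube_pm_C5 g h a b
  (e1 : g * h = b * g) (e2 : b * g = a * b) (e3 : h * a = g * b)
  (e4 : h * g = b * a) (e5 : b * a = a * h) : comm_cube_pm g h a b.
Proof.
rewrite /comm_cube_pm; have e0 := gcommE g h; set c := gcomm _ _ g h in e0 *.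
clearbody c.
have chE : c * h = b by apply: (mulIg (x := g)); rewrite -mulgA e0 e1.
have caE : c * a = g by apply: (mulIg (x := h)); rewrite -mulgA -e5 -e4 e0.
have cgC : c * g = g * c.
  by apply: (mulIg (x := h)); rewrite -!mulgA chE e1 e2 (mulg_rassoc _ caE).
have chC : c * h = h * c.
  by apply: (mulIg (x := a)); rewrite -!mulgA (mulg_rassoc _ chE) -e4 caE.
split.
  apply: (mulIg (x := h * g)); rewrite mul1g -!mulgA e0.
  by rewrite (mulg_rassoc2 _ cgC) chE -e3 (mulg_rassoc2 _ chC) caE.
split; [right | left]; first exact: lquot_eqV.
by apply: lquot_eq; rewrite -chE chC.
Qed.

Lemma comm_cube_pm_C6 g h a b
  (e1 : g * h = b * g) (e2 : b * g = h * a) (e3 : a * b = h * g)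
  (e4 : b * a = g * b) (e5 : g * b = a * h) : comm_cube_pm g h a b.
Proof.
rewrite /comm_cube_pm; have e0 := gcommE g h; set c := gcomm _ _ g h in e0 *.
clearbody c.
have chE : c * h = b by apply: (mulIg (x := g)); rewrite -mulgA e0 e1.
have gcE : g * c = a by apply: (mulIg (x := h)); rewrite -mulgA chE e5.
have hcC : h * c = c * h.
  apply: (mulgI (x := g)); rewrite chE -e4 -gcE -chE -!mulgA.
  by rewrite (mulg_rassoc3 _ e0).
have cgC : c * g = g * c.
  by apply: (mulgI (x := h)); rewrite (mulg_rassoc2 _ hcC) e0 e1 e2 -gcE.
split.
  apply: (mulIg (x := h * g)); rewrite mul1g -!mulgA e0.
  by rewrite !(mulg_rassoc2 _ cgC) chE -e3 -gcE -mulgA.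
by split; left; apply: lquot_eq; rewrite ?gcE // -chE hcC.
Qed.

End GroupCalculus.

(* Each condition (C3)-(C6) and the skew congruence at a well-chosen z force
   two further relations (the count at z can only balance mod 3 if both
   unknown products equal z); then the group-theoretic core applies. *)
Section Conditions.
Variables (G : eqType) (mul : G -> G -> G) (one : G) (inv : G -> G) (phi : G -> G).
Hypothesis HG : group_axioms mul one inv.
Hypothesis phiM : forall x y, phi (mul x y) = mul (phi y) (phi x).
Hypothesis skew_count : forall x y z,
  (skew_coeff3 mul phi x y z = skew_coeff3 mul phi y x z %[mod 3])%N.

Local Notation "x * y" := (mul x y).

Lemma condition_C3 g h (H1 : phi (g * h) = g * h) (H2 : h * g = phi g * h)
  (H3 : phi g * h = g * phi h) : comm_cube_pm mul one inv g h (phi g) (phi h).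
Proof.
rewrite phiM in H1.
have /andP[/eqP E4 /eqP E5] :
    (h * phi g == phi g * phi h) && (phi h * g == phi g * phi h).
  move: (skew_count g h (phi g * phi h)).
  by rewrite /skew_coeff3 -H3 -H2 H1 eqxx; do 4!case: (_ == _).
apply: comm_cube_pm_C3 => //; first by rewrite H2.
by rewrite E4.
Qed.

Lemma condition_C4 g h (H1 : g * h = h * phi g) (H2 : h * phi g = phi g * phi h)
  (H3 : phi h * g = phi g * h) : comm_cube_pm mul one inv g h (phi g) (phi h).
Proof.
have /andP[/eqP E4 /eqP E5] : (phi h * phi g == h * g) && (g * phi h == h * g).
  move: (skew_count g h (h * g)).
  by rewrite /skew_coeff3 -H2 -H1 H3 eqxx; do 4!case: (_ == _).
by apply: comm_cube_pm_C4 => //; rewrite -H2 -H1.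
Qed.

Lemma condition_C5 g h (H1 : g * h = phi h * g) (H2 : phi h * g = phi g * phi h)
  (H3 : h * phi g = g * phi h) : comm_cube_pm mul one inv g h (phi g) (phi h).
Proof.
have /andP[/eqP E4 /eqP E5] : (phi h * phi g == h * g) && (phi g * h == h * g).
  move: (skew_count g h (h * g)).
  by rewrite /skew_coeff3 -H2 -H1 -H3 eqxx; do 4!case: (_ == _).
by apply: comm_cube_pm_C5 => //; rewrite E4 E5.
Qed.

Lemma condition_C6 g h (H1 : phi (h * g) = h * g) (H2 : g * h = phi h * g)
  (H3 : phi h * g = h * phi g) : comm_cube_pm mul one inv g h (phi g) (phi h).
Proof.
rewrite phiM in H1.
have /andP[/eqP E4 /eqP E5] :
    (g * phi h == phi h * phi g) && (phi g * h == phi h * phi g).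
  move: (skew_count g h (phi h * phi g)).
  by rewrite /skew_coeff3 H1 -H3 -H2 eqxx; do 4!case: (_ == _).
by apply: comm_cube_pm_C6 => //; rewrite E4 E5.
Qed.
End Conditions.

Theorem lemma3p7 (R : comNzRingType) (G : eqType)
  (mul : G -> G -> G) (one : G) (inv : G -> G) (phi : G -> G)
  (HG : group_axioms mul one inv) (Hphi : is_involution mul phi)
  (Hchar : 3%N \in [pchar R])
  (Hcomm : skew_commutative R mul phi)
  (g h : G) (Hg : phi g <> g) (Hh : phi h <> h) (Hgh : mul g h <> mul h g)
  (Hcond :
     (phi (mul g h) = mul g h /\ mul h g = mul (phi g) h /\ mul (phi g) h = mul g (phi h))
  \/ (mul g h = mul h (phi g) /\ mul h (phi g) = mul (phi g) (phi h)
      /\ mul (phi h) g = mul (phi g) h)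
  \/ (mul g h = mul (phi h) g /\ mul (phi h) g = mul (phi g) (phi h)
      /\ mul h (phi g) = mul g (phi h))
  \/ (phi (mul h g) = mul h g /\ mul g h = mul (phi h) g /\ mul (phi h) g = mul h (phi g))) :
  same_cyc mul one inv (mul (inv g) (phi g)) (gcomm mul inv g h) /\
  same_cyc mul one inv (mul (inv h) (phi h)) (gcomm mul inv g h) /\
  (let c := gcomm mul inv g h in mul c (mul c c) = one).
Proof.
case: Hphi => phiM phiK.
have skew_count := skew_coeff3_sym phiK Hchar Hcomm.
have [c3 [pm_g pm_h]] : comm_cube_pm mul one inv g h (phi g) (phi h).
  case: Hcond => [|[|[]]] [H1 [H2 H3]].
  - exact: condition_C3 HG phiM skew_count g h H1 H2 H3.
  - exact: condition_C4 HG skew_count g h H1 H2 H3.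
  - exact: condition_C5 HG skew_count g h H1 H2 H3.
  - exact: condition_C6 HG phiM skew_count g h H1 H2 H3.
by split; [|split]; [exact: same_cyc_pm | exact: same_cyc_pm | exact: c3].
Qed.
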